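(* For a greedy policy, for every $n\ge1$ and every real $0\le x\le n$, $$\Gamma_{\mathbf R}[\lceil x\rceil]<\Gamma_{\mathbf S}[n-\lceil x\rceil]-\gamma\ \Longrightarrow\ R_{\mathbf G}(n)>x\ \Longrightarrow\ \Gamma_{\mathbf R}[\lfloor x\rfloor]\le\Gamma_{\mathbf S}[n-\lfloor x\rfloor]+\gamma.$$
   Context: Let $(r_i)_{i\ge1}$, $(s_i)_{i\ge1}$ be probability vectors on the positive integers with $\mu:=\sum_i r_is_i>0$, and $\gamma:=\sup_i r_i\vee\sup_i s_i$. Let $\{L_{\mathbf R}(n)\}_{n\ge1}$, $\{L_{\mathbf S}(n)\}_{n\ge1}$ be independent i.i.d. sequences with $\Pr(L_{\mathbf R}(1)=i)=r_i$, $\Pr(L_{\mathbf S}(1)=i)=s_i$. Put $X_{\mathbf R}(n)=s_{L_{\mathbf R}(n)}$, $X_{\mathbf S}(n)=r_{L_{\mathbf S}(n)}$, and $\Gamma_{\mathbf R}[m]=\sum_{j=1}^mX_{\mathbf R}(j)$, $\Gamma_{\mathbf S}[m]=\sum_{j=1}^mX_{\mathbf S}(j)$ (with $\Gamma[0]=0$). A reading policy is a $\{0,1\}$-valued process $C(n)$ ($C(n)=1$ iff the $n$-th record is read from $\mathbf R$), $R(n)=\sum_{j\le n}C(j)$, $S(n)=n-R(n)$, with $C(n)$ being $\mathcal F_{n-1}$-measurable where $\mathcal F_n=\mathcal F_0\vee\sigma(L_{\mathbf R}(1),\dots,L_{\mathbf R}(R(n));L_{\mathbf S}(1),\dots,L_{\mathbf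 S}(S(n)))$ and $\mathcal F_0$ (randomization) is independent of the labels. A greedy policy satisfies, for $n\ge1$, $C(n+1)=1$ if $\Gamma_{\mathbf S}[S(n)]>\Gamma_{\mathbf R}[R(n)]$ and $C(n+1)=0$ if $\Gamma_{\mathbf S}[S(n)]<\Gamma_{\mathbf R}[R(n)]$ (ties arbitrary); $R_{\mathbf G}(n)$ is its $R(n)$. *)

From Stdlib Require Import Reals Lra Lia ZArith.
Open Scope R_scope.

(* A probability vector on the positive integers {1,2,...}, represented as
   p : nat -> R where only the values p i for i >= 1 are meaningful. *)
Definition prob_vector (p : nat -> R) : Prop :=
  (forall i : nat, (1 <= i)%nat -> 0 <= p i) /\
  infinite_sum (fun k => p (S k)) 1.

Definition is_mu (r s : nat -> R) (mu : R) : Prop :=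
  infinite_sum (fun k => r (S k) * s (S k)) mu.

Definition is_gamma (r s : nat -> R) (g : R) : Prop :=
  is_lub (fun y => exists i : nat, (1 <= i)%nat /\ (y = r i \/ y = s i)) g.

Fixpoint Gam (X : nat -> R) (m : nat) : R :=
  match m with
  | O => 0
  | S k => Gam X k + X (S k)
  end.

Definition GammaR (s : nat -> R) (LR : nat -> nat) (m : nat) : R :=
  Gam (fun j => s (LR j)) m.
Definition GammaS (r : nat -> R) (LS : nat -> nat) (m : nat) : R :=
  Gam (fun j => r (LS j)) m.

Fixpoint Rcount (C : nat -> bool) (n : nat) : nat :=
  match n with
  | O => O
  | S k => (Rcount C k + (if C (S k) then 1 else 0))%nat
  end.
Definition Scount (C : nat -> bool) (n : nat) : nat := (n - Rcount C n)%nat.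

(* Greedy policy rule, for n >= 1 (ties arbitrary, C(1) arbitrary). *)
Definition greedy (r s : nat -> R) (LR LS : nat -> nat) (C : nat -> bool) : Prop :=
  forall n : nat, (1 <= n)%nat ->
    (GammaS r LS (Scount C n) > GammaR s LR (Rcount C n) -> C (S n) = true) /\
    (GammaS r LS (Scount C n) < GammaR s LR (Rcount C n) -> C (S n) = false).

Definition nfloor (x : R) : nat := Z.to_nat (Int_part x).
Definition nceil (x : R) : nat := Z.to_nat (- Int_part (- x)).

(* Greedy reads from R only at a step where Γ_R[R] ≤ Γ_S[S], and from S only
   where Γ_S[S] ≤ Γ_R[R].  Looking at the step at which the (k+1)-st record of
   R, resp. the (n-k)-th record of S, is read and using that both Γ's are
   nondecreasing gives Γ_R[k] ≤ Γ_S[n-k] when R(n) > k, and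
   Γ_S[n-k] ≤ Γ_R[k] + γ when R(n) ≤ k, since γ bounds every increment of Γ_S.
   Take k = ⌊x⌋, resp. k = ⌈x⌉. *)

From Stdlib Require Import Reals Lra Lia ZArith.
Open Scope R_scope.

Lemma Rcount_le (C : nat -> bool) (n : nat) : (Rcount C n <= n)%nat.
Proof. induction n; simpl; [lia | destruct (C (S n)); lia]. Qed.

Lemma Rcount_negb (C : nat -> bool) (n : nat) :
  Rcount (fun i => negb (C i)) n = Scount C n.
Proof.
  unfold Scount; induction n as [|n IH]; [reflexivity|]; cbn [Rcount].
  rewrite IH; pose proof (Rcount_le C n); destruct (C (S n)); cbn [negb]; lia.
Qed.

Lemma Scount_negb (C : nat -> bool) (n : nat) :
  Scount (fun i => negb (C i)) n = Rcount C n.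
Proof.
  unfold Scount at 1; rewrite Rcount_negb; unfold Scount.
  pose proof (Rcount_le C n); lia.
Qed.

Lemma Rcount_hit (C : nat -> bool) (k n : nat) : (k < Rcount C n)%nat ->
  exists m, (m < n)%nat /\ C (S m) = true /\ Rcount C m = k.
Proof.
  induction n as [|n IH]; simpl; intros Hk; [lia|].
  destruct (Nat.lt_ge_cases k (Rcount C n)) as [Hlt | Hge].
  - destruct (IH Hlt) as (m & ? & ? & ?); exists m; repeat split; auto; lia.
  - exists n; destruct (C (S n)); [repeat split; auto; lia | lia].
Qed.

Definition reads_lagging (A B : nat -> R) (C : nat -> bool) : Prop :=
  forall m : nat,
    if C (S m) then A (Rcount C m) <= B (Scount C m)
    else B (Scount C m) <= A (Rcount C m).

Lemma reads_lagging_negb (A B : nat -> R) (C : nat -> bool) :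
  reads_lagging A B C -> reads_lagging B A (fun i => negb (C i)).
Proof.
  intros HC m; rewrite Rcount_negb, Scount_negb.
  specialize (HC m); destruct (C (S m)); exact HC.
Qed.

Lemma reads_lagging_Rcount (A B : nat -> R) (C : nat -> bool) (k n : nat) :
  Un_growing B -> reads_lagging A B C -> (k < Rcount C n)%nat ->
  A k <= B (n - S k)%nat.
Proof.
  intros HB HC Hk.
  destruct (Rcount_hit C k n Hk) as (m & Hmn & HCm & HRm).
  specialize (HC m); rewrite HCm, HRm in HC.
  apply (Rle_trans _ _ _ HC), Rge_le, growing_prop; [exact HB|].
  unfold Scount; lia.
Qed.

Lemma reads_lagging_Scount (A B : nat -> R) (C : nat -> bool) (j n : nat) :
  Un_growing A -> reads_lagging A B C -> (j < Scount C n)%nat ->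
  B j <= A (n - S j)%nat.
Proof.
  intros HA HC Hj; rewrite <- Rcount_negb in Hj.
  exact (reads_lagging_Rcount B A _ j n HA (reads_lagging_negb A B C HC) Hj).
Qed.

Lemma Gam_growing (X : nat -> R) : (forall j, 0 <= X j) -> Un_growing (Gam X).
Proof. intros HX n; simpl; specialize (HX (S n)); lra. Qed.

Lemma Gam_nonneg (X : nat -> R) (m : nat) : (forall j, 0 <= X j) -> 0 <= Gam X m.
Proof.
  intros HX; apply Rge_le; change 0 with (Gam X 0).
  apply growing_prop; [apply Gam_growing, HX | lia].
Qed.

Section Greedy.

Variables (r s : nat -> R) (LR LS : nat -> nat) (C : nat -> bool).
Hypothesis hR_nonneg : forall j, 0 <= s (LR j).
Hypothesis hS_nonneg : forall j, 0 <= r (LS j).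
Hypothesis hC : greedy r s LR LS C.

Lemma greedy_reads_lagging : reads_lagging (GammaR s LR) (GammaS r LS) C.
Proof.
  intros [|m].
  - unfold GammaR, GammaS; simpl; destruct (C 1%nat); apply Rle_refl.
  - destruct (hC (S m)) as [Hgt Hlt]; [lia|].
    destruct (C (S (S m))); apply Rnot_lt_le; intros Hc.
    + discriminate (Hlt Hc).
    + discriminate (Hgt Hc).
Qed.

Lemma greedy_GammaR_le (k n : nat) : (k < Rcount C n)%nat ->
  GammaR s LR k <= GammaS r LS (n - k).
Proof.
  intros Hk.
  apply (Rle_trans _ (GammaS r LS (n - S k))).
  - apply (reads_lagging_Rcount _ _ C); [apply Gam_growing, hS_nonneg | apply greedy_reads_lagging | exact Hk].
  - apply Rge_le, growing_prop; [apply Gam_growing, hS_nonneg | lia].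
Qed.

Lemma greedy_GammaS_le (gamma : R) (k n : nat) :
  (forall j, r (LS j) <= gamma) -> (Rcount C n <= k <= n)%nat ->
  GammaS r LS (n - k) <= GammaR s LR k + gamma.
Proof.
  intros Hgamma [HRk Hkn].
  pose proof (Gam_nonneg _ k hR_nonneg).
  pose proof (hS_nonneg 0%nat); pose proof (Hgamma 0%nat).
  unfold GammaR, GammaS in *.
  destruct (n - k)%nat as [|j] eqn:Ej; simpl; [lra|].
  assert (Hj : (j < Scount C n)%nat) by (unfold Scount; lia).
  pose proof (reads_lagging_Scount _ _ C j n (Gam_growing _ hR_nonneg)
                greedy_reads_lagging Hj) as Hlag.
  replace (n - S j)%nat with k in Hlag by lia.
  specialize (Hgamma (S j)); unfold GammaR, GammaS in Hlag; lra.
Qed.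

End Greedy.

Lemma INR_Z_to_nat (z : Z) : (0 <= z)%Z -> INR (Z.to_nat z) = IZR z.
Proof. intros Hz; rewrite INR_IZR_INZ, Z2Nat.id; auto. Qed.

Lemma nfloor_spec (x : R) : 0 <= x ->
  INR (nfloor x) <= x < INR (nfloor x) + 1.
Proof.
  intros Hx; destruct (base_Int_part x) as [Hle Hgt].
  assert (Hz : (0 <= Int_part x)%Z)
    by (cut (-1 < Int_part x)%Z; [lia | apply lt_IZR; lra]).
  unfold nfloor; rewrite INR_Z_to_nat by exact Hz; lra.
Qed.

Lemma nceil_spec (x : R) : 0 <= x ->
  x <= INR (nceil x) < x + 1.
Proof.
  intros Hx; destruct (base_Int_part (- x)) as [Hle Hgt].
  assert (Hz : (0 <= - Int_part (- x))%Z)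
    by (apply le_IZR; rewrite opp_IZR; lra).
  unfold nceil; rewrite INR_Z_to_nat, opp_IZR by exact Hz; lra.
Qed.

Theorem lemma3p1 (r s : nat -> R) (mu gamma : R)
  (hr : prob_vector r) (hs : prob_vector s)
  (hmu : is_mu r s mu) (hmupos : 0 < mu)
  (hgamma : is_gamma r s gamma)
  (LR LS : nat -> nat)
  (hLR : forall n, (1 <= LR n)%nat) (hLS : forall n, (1 <= LS n)%nat)
  (C : nat -> bool) (hC : greedy r s LR LS C) :
  forall (n : nat) (x : R), (1 <= n)%nat -> 0 <= x -> x <= INR n ->
    (GammaR s LR (nceil x) < GammaS r LS (n - nceil x) - gamma ->
       INR (Rcount C n) > x) /\
    (INR (Rcount C n) > x ->
       GammaR s LR (nfloor x) <= GammaS r LS (n - nfloor x) + gamma).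
Proof.
  intros n x _ Hx Hxn.
  assert (hR_nonneg : forall j, 0 <= s (LR j)) by (intros j; apply hs, hLR).
  assert (hS_nonneg : forall j, 0 <= r (LS j)) by (intros j; apply hr, hLS).
  assert (hS_gamma : forall j, r (LS j) <= gamma)
    by (intros j; apply hgamma; exists (LS j); auto).
  pose proof (hS_nonneg 0%nat) as Hr0; pose proof (hS_gamma 0%nat) as Hgamma0.
  pose proof (nceil_spec x Hx) as Hceil; pose proof (nfloor_spec x Hx) as Hfloor.
  split; intros H.
  - destruct (Rle_lt_dec (INR (Rcount C n)) x) as [Hle | Hgt]; [exfalso | exact Hgt].
    assert (Hk : (Rcount C n <= nceil x <= n)%nat)
      by (split; [apply INR_le | apply Nat.lt_succ_r, INR_lt; rewrite S_INR]; lra).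
    pose proof (greedy_GammaS_le r s LR LS C hR_nonneg hS_nonneg hC gamma _ _ hS_gamma Hk).
    lra.
  - assert (Hk : (nfloor x < Rcount C n)%nat) by (apply INR_lt; lra).
    pose proof (greedy_GammaR_le r s LR LS C hS_nonneg hC _ _ Hk).
    lra.
Qed.
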